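(* Let $A$ and $B$ be integral domains, and assume that the ring $A \times B$ has more than one unit. Then the factroids of $A \times B$ are precisely the subgroups of the form $F \times G$, where $F$ is a factroid of $A$ and $G$ is a factroid of $B$.
   Context: For a ring $R$, $\mathrm{reg}(R)$ is the set of (left) nonzerodivisors of $R$. A factroid of $R$ is an additive subgroup $F$ of $R$ such that for all $a\in R$ and $b\in\mathrm{reg}(R)$, $ba\in F$ implies $a\in F$. *)

From HB Require Import structures.
From mathcomp Require Import all_boot all_order all_algebra.
Set Implicit Arguments. Unset Strict Implicit. Unset Printing Implicit Defensive.
Import GRing.Theory.
Local Open Scope ring_scope.

Definition left_nzd (R : pzRingType) (b : R) : Prop :=
  forall x : R, b * x = 0 -> x = 0.

Definition add_subgroup (R : pzRingType) (F : R -> Prop) : Prop :=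
  F 0 /\ (forall x y, F x -> F y -> F (x - y)).

Definition factroid (R : pzRingType) (F : R -> Prop) : Prop :=
  add_subgroup F /\
  (forall a b : R, left_nzd b -> F (b * a) -> F a).

Definition more_than_one_unit (R : pzRingType) : Prop :=
  exists u v w z : R, u * v = 1 /\ v * u = 1 /\ w * z = 1 /\ z * w = 1 /\ u <> w.

From mathcomp Require Import all_boot all_order all_algebra.
Set Implicit Arguments. Unset Strict Implicit.
Import GRing.Theory.
Local Open Scope ring_scope.

(* Regular elements of R1 x R2 are the pairs of regular elements, so products
   of factroids are factroids.  Conversely, let S be a factroid of A x B and
   (c, d) a unit other than 1, say c <> 1.  Since (c, 1) is regular,
   (c^-1 x1, x2) lies in S with (x1, x2); subtracting gives
   ((1 - c^-1) x1, 0) in S, and as 1 - c^-1 <> 0 in the domain A, the regular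
   element (1 - c^-1, 1) cancels to (x1, 0) in S.  Hence S contains both
   coordinate projections of its elements and is the product of its two
   slices {a | (a, 0) in S} and {b | (0, b) in S}. *)

Section FactroidTheory.
Variables (R : pzRingType) (F : R -> Prop).
Hypothesis hF : factroid F.

Lemma factroid0 : F 0.
Proof. by case: hF => -[]. Qed.

Lemma factroidB x y : F x -> F y -> F (x - y).
Proof. by case: hF => -[_ FB] _; apply: FB. Qed.

Lemma factroidD x y : F x -> F y -> F (x + y).
Proof.
by move=> Fx Fy; have := factroidB Fx (factroidB factroid0 Fy); rewrite sub0r opprK.
Qed.

Lemma factroid_cancel a b : left_nzd b -> F (b * a) -> F a.
Proof. by case: hF => _; apply. Qed.

End FactroidTheory.

Lemma factroid_ext (R : pzRingType) (F G : R -> Prop) :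
  (forall x, F x <-> G x) -> factroid F -> factroid G.
Proof.
move=> FG [[F0 FB] Fcancel]; split; first split.
- exact/FG.
- by move=> x y /FG Fx /FG Fy; apply/FG/FB.
- by move=> a b breg /FG Fba; apply/FG/(Fcancel a b).
Qed.

Lemma left_nzd1 (R : pzRingType) : left_nzd (1 : R).
Proof. by move=> x; rewrite mul1r. Qed.

Lemma left_nzdE (R : idomainType) (b : R) : left_nzd b <-> b != 0.
Proof.
split=> [breg | b_neq0 x bx0].
- apply/eqP=> b0; have := oner_neq0 R.
  by rewrite (breg 1) ?eqxx // b0 mul0r.
- by move/eqP: bx0; rewrite mulf_eq0 (negbTE b_neq0) => /eqP.
Qed.

Lemma left_nzd_pair (R1 R2 : pzRingType) (b1 : R1) (b2 : R2) :
  left_nzd (b1, b2) <-> left_nzd b1 /\ left_nzd b2.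
Proof.
split=> [breg | [b1reg b2reg] [x1 x2] [/b1reg -> /b2reg ->]] //.
split=> [x1 b1x1 | x2 b2x2].
- by have /(congr1 fst) := breg (x1, 0) (congr2 pair b1x1 (mulr0 b2)).
- by have /(congr1 snd) := breg (0, x2) (congr2 pair (mulr0 b1) b2x2).
Qed.

Lemma factroid_prod (R1 R2 : pzRingType) (F : R1 -> Prop) (G : R2 -> Prop) :
  factroid F -> factroid G -> factroid (fun x : R1 * R2 => F x.1 /\ G x.2).
Proof.
move=> hF hG; split; first split.
- by split; apply: factroid0.
- by move=> x y [Fx Gx] [Fy Gy]; split; apply: factroidB.
- move=> [a1 a2] [b1 b2] /left_nzd_pair [b1reg b2reg] [/= Fba Gba].
  by split; [apply: factroid_cancel b1reg _ | apply: factroid_cancel b2reg _].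
Qed.

Section FactroidOfProduct.
Variables (R1 R2 : pzRingType) (S : R1 * R2 -> Prop).

Lemma pairD (a c : R1) (b d : R2) : (a, b) + (c, d) = (a + c, b + d) :> R1 * R2.
Proof. by []. Qed.

Lemma pairB (a c : R1) (b d : R2) : (a, b) - (c, d) = (a - c, b - d) :> R1 * R2.
Proof. by []. Qed.

Lemma pairM (a c : R1) (b d : R2) : (a, b) * (c, d) = (a * c, b * d) :> R1 * R2.
Proof. by []. Qed.

Hypothesis hS : factroid S.

Lemma factroid_fst_slice : factroid (fun a : R1 => S (a, 0)).
Proof.
split; first split.
- exact: factroid0 hS.
- by move=> x y Sx Sy; have := factroidB hS Sx Sy; rewrite pairB subr0.
- move=> a b breg Sba; apply: (factroid_cancel hS (b := (b, 1))).
    exact/left_nzd_pair/(conj breg (@left_nzd1 R2)).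
  by rewrite pairM mulr0.
Qed.

Lemma factroid_snd_slice : factroid (fun b : R2 => S (0, b)).
Proof.
split; first split.
- exact: factroid0 hS.
- by move=> x y Sx Sy; have := factroidB hS Sx Sy; rewrite pairB subr0.
- move=> a b breg Sba; apply: (factroid_cancel hS (b := (1, b))).
    exact/left_nzd_pair/(conj (@left_nzd1 R1) breg).
  by rewrite pairM mulr0.
Qed.

Lemma factroid_swap : factroid (fun y : R2 * R1 => S (y.2, y.1)).
Proof.
split; first split.
- exact: factroid0 hS.
- by move=> x y; apply: factroidB.
- move=> [a2 a1] [b2 b1] /left_nzd_pair [b2reg b1reg] Sba.
  by apply: (factroid_cancel hS (b := (b1, b2))) => //; apply/left_nzd_pair.
Qed.

Lemma factroid_fst_snd x : S x -> S (x.1, 0) <-> S (0, x.2).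
Proof.
case: x => x1 x2 Sx; split=> [Sx1 | Sx2].
- by have := factroidB hS Sx Sx1; rewrite pairB subrr subr0.
- by have := factroidB hS Sx Sx2; rewrite pairB subrr subr0.
Qed.

Lemma factroid_prodE :
  (forall x, S x -> S (x.1, 0)) -> forall x, S x <-> S (x.1, 0) /\ S (0, x.2).
Proof.
move=> S_fst [x1 x2]; split=> [Sx | [Sx1 Sx2]].
- by split; [apply: S_fst | apply/(factroid_fst_snd Sx)/S_fst].
- by have := factroidD hS Sx1 Sx2; rewrite pairD addr0 add0r.
Qed.

Lemma factroid_unit_fst (c c' : R1) :
  c * c' = 1 -> left_nzd c -> left_nzd (1 - c') -> forall x, S x -> S (x.1, 0).
Proof.
move=> cc' creg c'reg [x1 x2] Sx.
have Sc'x : S (c' * x1, x2).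
  apply: (factroid_cancel hS (b := (c, 1))).
    exact/left_nzd_pair/(conj creg (@left_nzd1 R2)).
  by rewrite pairM mulrA cc' !mul1r.
apply: (factroid_cancel hS (b := (1 - c', 1))).
  exact/left_nzd_pair/(conj c'reg (@left_nzd1 R2)).
have := factroidB hS Sx Sc'x.
by rewrite pairB pairM subrr mulr0 mulrBl mul1r.
Qed.

End FactroidOfProduct.

Lemma exists_unit_neq1 (R : pzRingType) :
  more_than_one_unit R -> exists u v : R, u * v = 1 /\ u != 1.
Proof.
move=> [u [v [w [z [uv [_ [wz [_ u_neq_w]]]]]]]].
have [u1 | u_neq1] := eqVneq u 1; last by exists u, v.
exists w, z; split=> //; apply/eqP=> w1; exact/u_neq_w/(etrans u1 (esym w1)).
Qed.

Lemma idomain_unit_neq1 (R : idomainType) (c c' : R) :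
  c * c' = 1 -> c != 1 -> left_nzd c /\ left_nzd (1 - c').
Proof.
move=> cc' c_neq1; split; apply/left_nzdE.
- by apply: contra_neq (oner_neq0 R) => c0; rewrite -cc' c0 mul0r.
- by rewrite subr_eq0; apply: contra c_neq1 => /eqP c'1; rewrite -cc' -c'1 mulr1.
Qed.

Lemma idomain_factroid_fst (A B : idomainType) (S : A * B -> Prop) (u v : A * B) :
  factroid S -> u * v = 1 -> u != 1 -> forall x, S x -> S (x.1, 0).
Proof.
case: u v => c d [c' d'] hS [cc' dd'] cd_neq1.
have [c1 | c_neq1] := eqVneq c 1; last first.
  by have [] := idomain_unit_neq1 cc' c_neq1; apply: factroid_unit_fst.
have d_neq1 : d != 1 by apply: contraNneq cd_neq1 => d1; rewrite c1 d1.
have [dreg d'reg] := idomain_unit_neq1 dd' d_neq1.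
move=> [x1 x2] Sx; apply/(factroid_fst_snd hS Sx).
exact: factroid_unit_fst (factroid_swap hS) _ _ dd' dreg d'reg (x2, x1) Sx.
Qed.

Theorem theorem4p19 (A B : idomainType) :
  more_than_one_unit (A * B)%type ->
  forall S : (A * B)%type -> Prop,
    factroid S <->
    exists (F : A -> Prop) (G : B -> Prop),
      factroid F /\ factroid G /\ (forall x : (A * B)%type, S x <-> F x.1 /\ G x.2).
Proof.
move=> /exists_unit_neq1 [u [v [uv u_neq1]]] S; split=> [hS | ].
- exists (fun a => S (a, 0)), (fun b => S (0, b)).
  split; [exact: factroid_fst_slice | split; [exact: factroid_snd_slice|]].
  exact/factroid_prodE/(idomain_factroid_fst hS uv u_neq1).
- move=> [F [G [hF [hG SE]]]].
  by apply: factroid_ext (factroid_prod hF hG) => x; apply: iff_sym.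
Qed.
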